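(* Let $a_0,a_1,a_2,b_0,b_1,b_2$ be real numbers and let $(T(n,k))_{n\ge 0,\,k\in\mathbb{Z}}$ be defined by $T(0,0)=1$, $T(n,k)=0$ whenever $k<0$ or $k>n$, and \[ T(n,k)=(a_0+a_1k+a_2n)\,T(n-1,k)+(b_0+b_1k+b_2n)\,T(n-1,k-1)\qquad(n\ge1). \] Then for all integers $0\le k\le n$, \[ T(n,k)=\sum_{1\le p_1<\cdots<p_{n-k}\le n}\ \prod_{i=1}^{n-k}\big((a_2+a_1)p_i-a_1i+a_0\big)\ \prod_{i=1}^{k}\Big(b_0+(b_1+b_2)i+b_2\sum_{j=0}^{i-1}\#\{l: p_l-l=j\}\Big). \]
   Context: The outer sum runs over strictly increasing sequences of $n-k$ integers in $\{1,\dots,n\}$; $\#$ denotes cardinality; empty products equal $1$. *)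

From HB Require Import structures.
From mathcomp Require Import all_boot all_order all_algebra.
From mathcomp Require Import reals.
Set Implicit Arguments. Unset Strict Implicit. Unset Printing Implicit Defensive.
Import Order.TTheory GRing.Theory Num.Theory.
Local Open Scope ring_scope.

(* Values at k < 0 are 0: this is
   realised by the "if k is k'.+1 ... else 0" branch.  Values at k > n are 0
   automatically (proved trivially by induction), matching T(n,k)=0 for k>n. *)
Fixpoint Ttri (R : pzRingType) (a0 a1 a2 b0 b1 b2 : R) (n k : nat) : R :=
  match n with
  | 0%N => if k == 0%N then 1 else 0
  | m.+1 =>
      (a0 + a1 * k%:R + a2 * n%:R) * Ttri a0 a1 a2 b0 b1 b2 m k
      + (if k is k'.+1 then (b0 + b1 * k%:R + b2 * n%:R) * Ttri a0 a1 a2 b0 b1 b2 m k'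
         else 0)
  end.

(* For a tuple t : m.-tuple 'I_n encoding p_1 < ... < p_m in {1..n},
   p_(i+1) = val (tnth t i) + 1 (0-based index i). *)
Definition pseq n m (t : m.-tuple 'I_n) (i : 'I_m) : nat := (val (tnth t i)).+1.

Definition cnt n m (t : m.-tuple 'I_n) (j : nat) : nat :=
  #|[set l : 'I_m | (pseq t l - l.+1)%N == j]|.

From HB Require Import structures.
From mathcomp Require Import all_boot all_order all_algebra.
From mathcomp Require Import reals.
From mathcomp Require Import zify ring.
Import Order.TTheory GRing.Theory Num.Theory.
Set Implicit Arguments. Unset Strict Implicit. Unset Printing Implicit Defensive.

(* Both sides satisfy the recurrence defining T.  Split the sequences
   1 <= p_1 < ... < p_(n-k) <= n by whether p_(n-k) = n.  Those that do extend
   a sequence counted in T(n-1,k) by the factor (a2+a1)n - a1(n-k) + a0, which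
   is the a-coefficient a0 + a1 k + a2 n; their new offset p_(n-k) - (n-k) = k
   is too large to change any count in the b-product.  Those that do not are
   the sequences counted in T(n-1,k-1); all their offsets p_l - l are below k,
   so the count term of the new b-factor (i = k) is the full length n - k and
   that factor is the b-coefficient b0 + b1 k + b2 n. *)

(* The sequences 0 <= s_0 < ... < s_(m-1) < n, i.e. s_l = p_(l+1) - 1. *)
Fixpoint incr_seqs (n m : nat) : seq (seq nat) :=
  match n with
  | 0 => if m == 0 then [:: [::]] else [::]
  | n'.+1 => incr_seqs n' m
             ++ (if m is m'.+1 then map (rcons^~ n') (incr_seqs n' m') else [::])
  end.

Lemma sorted_ltn_rcons s x :
  sorted ltn (rcons s x) = sorted ltn s && all (ltn^~ x) s.
Proof.
rewrite !sorted_pairwise; try exact: ltn_trans.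
by rewrite -cats1 pairwise_cat /= andbT allrel1r andbC.
Qed.

Lemma incr_seqsP n m s : s \in incr_seqs n m ->
  [/\ sorted ltn s, size s = m & all (gtn n) s].
Proof.
elim: n m s => [|n IHn] m s /=; first by case: m => //=; rewrite inE => /eqP ->.
have all_ltS t : all (gtn n) t -> all (gtn n.+1) t.
  by move=> /allP lt_t; apply/allP => x /lt_t /= /ltnW.
rewrite mem_cat => /orP [/IHn [sorted_s size_s /all_ltS] //|].
case: m => // m /mapP [s' /IHn [sorted_s' size_s' lt_s'] ->].
by rewrite sorted_ltn_rcons size_rcons all_rcons /= ltnSn sorted_s' size_s' lt_s' all_ltS.
Qed.

Lemma incr_seqs_complete n s :
  sorted ltn s -> all (gtn n) s -> s \in incr_seqs n (size s).
Proof.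
elim: n s => [|n IHn] s; first by case: s.
case/lastP: s => [|s x]; first by move=> _ _; rewrite /= mem_cat (IHn [::]).
rewrite sorted_ltn_rcons all_rcons /= => /andP [sorted_s lt_s_x] /andP [lt_x_Sn _].
have lt_s_n : all (gtn n) s by apply: sub_all lt_s_x => y /= /leq_trans; apply.
rewrite /= mem_cat size_rcons; apply/orP.
have [->|ne_x_n] := eqVneq x n; first by right; apply/map_f/IHn.
left; rewrite -(size_rcons s x); apply: IHn; first by rewrite sorted_ltn_rcons sorted_s.
by rewrite all_rcons /= lt_s_n andbT ltn_neqAle ne_x_n -ltnS.
Qed.

Lemma incr_seqs_uniq n m : uniq (incr_seqs n m).
Proof.
elim: n m => [|n IHn] m /=; first by case: (m == 0).
case: m => [|m]; first by rewrite cats0.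
rewrite cat_uniq IHn map_inj_uniq ?IHn ?andbT //; last exact: rcons_injl.
apply/hasPn => _ /mapP [s _ ->]; apply/negP => /incr_seqsP [_ _].
by rewrite all_rcons /= ltnn.
Qed.

Lemma incr_seqs_eq_nil n m : (n < m)%N -> incr_seqs n m = [::].
Proof. by elim: n m => [|n IHn] [|m] //= lt_n_m; rewrite !IHn // ltnW. Qed.

Lemma incr_seqs_nth_bound n m s l : s \in incr_seqs n m -> (l < m)%N ->
  (nth 0 s l + (m - l) <= n)%N.
Proof.
elim: n m s l => [|n IHn] m s l /=; first by case: m.
rewrite mem_cat => /orP [/IHn bound_s lt_l_m|]; first by have := bound_s l lt_l_m; lia.
case: m => // m /mapP [s' s'_in ->] lt_l_Sm.
have [_ size_s' _] := incr_seqsP s'_in.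
rewrite nth_rcons size_s'; case: ltngtP => [lt_l_m||->]; last by lia.
- by have := IHn _ _ _ s'_in lt_l_m; lia.
- by lia.
Qed.

Local Open Scope ring_scope.

Lemma Ttri_eq0 (R : pzRingType) (a0 a1 a2 b0 b1 b2 : R) n k : (n < k)%N ->
  Ttri a0 a1 a2 b0 b1 b2 n k = 0.
Proof.
elim: n k => [|n IHn] [|k] //= lt_n_k.
by rewrite !IHn ?mulr0 ?addr0 //; apply: ltnW.
Qed.

Section Weight.
Variables (R : comPzRingType) (a0 a1 a2 b0 b1 b2 : R).

Definition offset_count m (s : seq nat) j : nat :=
  (\sum_(l < m) (nth 0 s l - l == j))%N.

Definition weight m k (s : seq nat) : R :=
  (\prod_(i < m) ((a2 + a1) * (nth 0 s i).+1%:R - a1 * i.+1%:R + a0))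
  * \prod_(1 <= i < k.+1)
      (b0 + (b1 + b2) * i%:R + b2 * (\sum_(0 <= j < i) (offset_count m s j)%:R)).

Lemma sum_offset_count m s K : (forall l, l < m -> nth 0 s l - l < K)%N ->
  (\sum_(0 <= j < K) offset_count m s j)%N = m.
Proof.
move=> lt_offset; rewrite exchange_big /= -[RHS]card_ord -sum1_card.
apply: eq_bigr => l _; under eq_bigr => j _ do rewrite eq_sym.
by rewrite -big_mkcond big_nat1_eq lt_offset.
Qed.

Lemma offset_count_rcons m s x j : size s = m -> (x - m != j)%N ->
  offset_count m.+1 (rcons s x) j = offset_count m s j.
Proof.
move=> size_s ne_j; rewrite /offset_count big_ord_recr /= nth_rcons size_s ltnn eqxx.
rewrite (negbTE ne_j) addn0; apply: eq_bigr => l _.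
by rewrite nth_rcons size_s ltn_ord.
Qed.

Lemma weightS n m k s : s \in incr_seqs n m -> (m + k = n)%N ->
  weight m k.+1 s = weight m k s * (b0 + b1 * k.+1%:R + b2 * n.+1%:R).
Proof.
move=> s_in sum_mk; rewrite /weight -mulrA big_nat_recr //= -natr_sum.
rewrite (@sum_offset_count _ _ k.+1) -?sum_mk; first by congr (_ * (_ * _)); ring.
by move=> l lt_l_m; have := incr_seqs_nth_bound s_in lt_l_m; lia.
Qed.

Lemma weight_rcons n m k s : s \in incr_seqs n m -> (m + k = n)%N ->
  weight m.+1 k (rcons s n) = weight m k s * (a0 + a1 * k%:R + a2 * n.+1%:R).
Proof.
move=> s_in sum_mk; have [_ size_s _] := incr_seqsP s_in.
rewrite /weight big_ord_recr /= nth_rcons size_s ltnn eqxx.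
under eq_bigr => i _ do rewrite /= nth_rcons size_s ltn_ord.
under [X in _ * X]eq_big_nat => i /andP [_ le_i_k].
  under eq_big_nat => j /andP [_ lt_j_i].
    rewrite offset_count_rcons //; last by apply/eqP; lia.
  over.
over.
rewrite -sum_mk; ring.
Qed.

Lemma Ttri_incr_seqs n k : (k <= n)%N ->
  Ttri a0 a1 a2 b0 b1 b2 n k = \sum_(s <- incr_seqs n (n - k)) weight (n - k) k s.
Proof.
elim: n k => [|n IHn] k le_k_n.
  move: le_k_n; rewrite leqn0 => /eqP ->.
  by rewrite big_seq1 /weight big_ord0 big_geq ?mulr1.
rewrite /= big_cat [RHS]addrC /=; congr (_ + _).
  have [lt_n_k|{}le_k_n] := ltnP n k.
    by rewrite Ttri_eq0 // mulr0 (_ : n.+1 - k = 0)%N ?big_nil //; lia.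
  rewrite subSn // big_map IHn // big_distrr; apply: eq_big_seq => s s_in.
  by rewrite (weight_rcons s_in) ?subnK //; apply: mulrC.
case: k le_k_n => [|k] le_k_n; first by rewrite incr_seqs_eq_nil ?big_nil.
rewrite subSS IHn // big_distrr; apply: eq_big_seq => s s_in.
by rewrite (weightS s_in) ?subnK //; apply: mulrC.
Qed.

End Weight.

Section Tuples.
Variables (n m : nat).

Lemma pseq_nth (t : m.-tuple 'I_n) i : pseq t i = (nth 0 (map val t) i).+1.
Proof. by rewrite /pseq -tnth_map (tnth_nth 0%N). Qed.

Lemma cnt_offset_count (t : m.-tuple 'I_n) j : cnt t j = offset_count m (map val t) j.
Proof.
rewrite /cnt -sum1dep_card big_mkcond /=; apply: eq_bigr => l _.
by rewrite pseq_nth subSS; case: (_ == _).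
Qed.

Lemma perm_sorted_tuples_incr_seqs :
  perm_eq [seq map val (tval t) | t : m.-tuple 'I_n <- index_enum _ & sorted ltn (map val t)]
          (incr_seqs n m).
Proof.
apply: uniq_perm; last move=> s; apply/idP/idP.
- rewrite map_inj_uniq ?filter_uniq ?index_enum_uniq //.
  by move=> t1 t2 /(inj_map val_inj) /val_inj.
- exact: incr_seqs_uniq.
- case/mapP => t; rewrite mem_filter => /andP [sorted_t _] ->.
  have := incr_seqs_complete (n := n) sorted_t; rewrite size_map size_tuple; apply.
  by apply/allP => _ /mapP [i _ ->]; exact: ltn_ord.
- move=> s_in; have [sorted_s size_s lt_s_n] := incr_seqsP s_in.
  have val_pmap : map val (pmap insub s : seq 'I_n) = s.
    clear -lt_s_n; elim: s lt_s_n => //= x s IHs /andP [lt_x_n /IHs val_s].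
    by rewrite insubT /= val_s.
  have size_pmap : size (pmap insub s : seq 'I_n) == m.
    by rewrite -(size_map val) val_pmap size_s.
  apply/mapP; exists (Tuple size_pmap) => //=.
  by rewrite mem_filter val_pmap sorted_s mem_index_enum.
Qed.

End Tuples.

Theorem mainTheorem5 (R : realType) (a0 a1 a2 b0 b1 b2 : R) (n k : nat) :
  (k <= n)%N ->
  Ttri a0 a1 a2 b0 b1 b2 n k =
  \sum_(t : (n - k).-tuple 'I_n | sorted ltn (map val t))
     ((\prod_(i < n - k) ((a2 + a1) * (pseq t i)%:R - a1 * (i.+1)%:R + a0))
      * \prod_(1 <= i < k.+1)
          (b0 + (b1 + b2) * i%:R + b2 * (\sum_(0 <= j < i) (cnt t j)%:R))).
Proof.
move=> le_k_n; rewrite Ttri_incr_seqs //.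
rewrite -(perm_big _ (perm_sorted_tuples_incr_seqs _ _)) big_map big_filter.
apply: eq_bigr => t _; rewrite /weight; congr (_ * _).
  by apply: eq_bigr => i _; rewrite pseq_nth.
apply: eq_big_nat => i _; congr (_ + _ * _); apply: eq_big_nat => j _.
by rewrite cnt_offset_count.
Qed.
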